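(* For every set $\Gamma\subseteq\mathcal{L}(\boxdot)$ and every $\phi\in\mathcal{L}(\boxdot)$, the following are equivalent: (a) $\Gamma\vdash_{{\bf K5^\boxdot}}\phi$; (b) $\Gamma\vDash_{qe}\phi$; (c) $\Gamma\vDash_{pe}\phi$.
   Context: Fix a nonempty set $\mathbf{P}$ of propositional variables. A bimodal model is $\langle S,R_1,R_2,V\rangle$ with $S$ nonempty, $R_1,R_2\subseteq S\times S$, $V:\mathbf{P}\to\mathcal{P}(S)$. $\mathcal{L}(\boxdot):\ \phi::=p\mid\neg\phi\mid(\phi\wedge\phi)\mid\boxdot\phi$. Truth: $\mathcal{M},s\vDash\boxdot\phi$ iff for all $t,u$ with $sR_1t$ and $sR_2u$, ($\mathcal{M},t\vDash\phi\iff\mathcal{M},u\vDash\phi$); atoms and Booleans as usual. ${\bf K^\boxdot}$ has axioms: all instances of propositional tautologies; $\boxdot\top$; $\boxdot\phi\leftrightarrow\boxdot\neg\phi$; $\boxdot\phi\wedge\boxdot\psi\to\boxdot(\phi\wedge\psi)$; $\boxdot\phi\to\boxdot(\phi\vee\psi)\vee\boxdot(\neg\phi\vee\chi)$; rules: modus ponens and RE: from $\phi\leftrightarrow\psi$ infer $\boxdot\phi\leftrightarrow\boxdot\psi$. ${\bf K5^\boxdot}$ is ${\bf K^\boxdot}$ plus the axiom schema $\neg\boxdot\phi\to\boxdot(\neg\boxdot\phi\vee\psi)$. A bimodal frame/model is $qe$ (quasi-Euclidean) if for all $i,j\in\{1,2\}$ and all $x,y,z$: $xR_iy\wedge xR_jz\to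 yR_jz$; it is $pe$ (pseudo-Euclidean) if for all $i,j\in\{1,2\}$ and all $x,y,z$: $xR_iy\wedge xR_jz\to yR_1z\wedge yR_2z$. $\Gamma\vDash_{qe}\phi$ means: for every $qe$-model $\mathcal{M}$ and state $s$, if all of $\Gamma$ is true at $s$ then $\phi$ is true at $s$; similarly $\vDash_{pe}$. $\Gamma\vdash\phi$ means some finite conjunction of members of $\Gamma$ provably implies $\phi$. *)

From Stdlib Require Import List Classical.
Import ListNotations.

Section Syntax.
Variable P : Type.

Inductive form : Type :=
| Var : P -> form
| Neg : form -> form
| And : form -> form -> form
| Bd  : form -> form.

Definition Or (a b : form) : form := Neg (And (Neg a) (Neg b)).
Definition Imp (a b : form) : form := Neg (And a (Neg b)).
Definition Iff (a b : form) : form := And (Imp a b) (Imp b a).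
(* \top, using a fixed variable p0 (P is nonempty) *)
Definition Top (p0 : P) : form := Neg (And (Var p0) (Neg (Var p0))).

(* Propositional tautologies: formulas true under every Boolean assignment to
   their propositional "atoms", i.e. variables and boxdot-formulas. *)
Fixpoint peval (v : form -> bool) (f : form) : bool :=
  match f with
  | Var _ => v f
  | Bd _ => v f
  | Neg a => negb (peval v a)
  | And a b => andb (peval v a) (peval v b)
  end.
Definition taut (f : form) : Prop := forall v : form -> bool, peval v f = true.

Inductive K_thm (p0 : P) (Ax : form -> Prop) : form -> Prop :=
| ax_taut : forall f, taut f -> K_thm p0 Ax f
| ax_top : K_thm p0 Ax (Bd (Top p0))
| ax_neg : forall f, K_thm p0 Ax (Iff (Bd f) (Bd (Neg f)))
| ax_and : forall f g, K_thm p0 Ax (Imp (And (Bd f) (Bd g)) (Bd (And f g)))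
| ax_dis : forall f g h,
    K_thm p0 Ax (Imp (Bd f) (Or (Bd (Or f g)) (Bd (Or (Neg f) h))))
| ax_extra : forall f, Ax f -> K_thm p0 Ax f
| r_mp : forall f g, K_thm p0 Ax (Imp f g) -> K_thm p0 Ax f -> K_thm p0 Ax g
| r_re : forall f g, K_thm p0 Ax (Iff f g) -> K_thm p0 Ax (Iff (Bd f) (Bd g)).

Definition ax5 (f : form) : Prop :=
  exists a b, f = Imp (Neg (Bd a)) (Bd (Or (Neg (Bd a)) b)).

Definition K5_thm (p0 : P) : form -> Prop := K_thm p0 ax5.

Fixpoint conj (p0 : P) (l : list form) : form :=
  match l with
  | [] => Top p0
  | [a] => a
  | a :: l' => And a (conj p0 l')
  end.

Definition K5_derives (p0 : P) (G : form -> Prop) (f : form) : Prop :=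
  exists l : list form, (forall g, In g l -> G g) /\ K5_thm p0 (Imp (conj p0 l) f).

Record model : Type := {
  st : Type;
  st_inh : inhabited st;
  R1 : st -> st -> Prop;
  R2 : st -> st -> Prop;
  val : P -> st -> Prop }.

Fixpoint sat (M : model) (s : st M) (f : form) : Prop :=
  match f with
  | Var p => val M p s
  | Neg a => ~ sat M s a
  | And a b => sat M s a /\ sat M s b
  | Bd a => forall t u, R1 M s t -> R2 M s u -> (sat M t a <-> sat M u a)
  end.

Definition Rel (M : model) (i : bool) : st M -> st M -> Prop :=
  if i then R1 M else R2 M.

Definition qe (M : model) : Prop :=
  forall (i j : bool) (x y z : st M), Rel M i x y -> Rel M j x z -> Rel M j y z.

Definition pe (M : model) : Prop :=
  forall (i j : bool) (x y z : st M), Rel M i x y -> Rel M j x z ->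
    R1 M y z /\ R2 M y z.

Definition conseq (C : model -> Prop) (G : form -> Prop) (f : form) : Prop :=
  forall (M : model) (s : st M), C M -> (forall g, G g -> sat M s g) -> sat M s f.

End Syntax.

Arguments Var {P}. Arguments Neg {P}. Arguments And {P}. Arguments Bd {P}.
Arguments K5_derives {P}. Arguments conseq {P}. Arguments qe {P}. Arguments pe {P}.

(* Soundness: every axiom of K5^boxdot is true in every quasi-Euclidean (qe)
   model and the rules preserve this; pseudo-Euclidean (pe) models are qe, so
   derivability gives qe-consequence, which in turn gives pe-consequence.

   Completeness for pe models is proved with a canonical model. For a maximal
   consistent set S, the "box" of S is the set of formulas f such that
   boxdot(f \/ g) is in S for every g; morally, f holds at every successor.
   S has successors only if some boxdot chi is not in S, and then its successors
   are the maximal consistent sets containing its box. Taking this relation as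
   both R1 and R2, axiom 5^boxdot makes it Euclidean, so the canonical model is
   pe, and the truth lemma turns a pe-consequence into a derivation. *)
From mathcomp Require classical_sets.
From Stdlib Require Import List Classical ClassicalEpsilon.
Import ListNotations.

Arguments Or {P}. Arguments Imp {P}. Arguments Iff {P}. Arguments Top {P}.
Arguments peval {P}. Arguments taut {P}. Arguments K5_thm {P}. Arguments conj {P}.
Arguments sat {P}. Arguments R1 {P}. Arguments R2 {P}.

Section K5Boxdot.
Variable P : Type.
Variable p0 : P.
Notation F := (form P).
Notation Thm := (K5_thm p0).
Notation derives := (K5_derives p0).

Ltac bool_cases := intro; simpl;
  repeat match goal with
         | |- context [peval ?w ?x] => destruct (peval w x)
         | |- context [?w (Bd ?x)] => destruct (w (Bd x))
         | |- context [?w (Var ?x)] => destruct (w (Var x))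
         end;
  simpl; intros; try reflexivity; try discriminate.

Definition Bot : F := Neg (Top p0).

Definition extend (S : F -> Prop) (x : F) : F -> Prop := fun g => S g \/ g = x.

Lemma thm_taut_imp (a b : F) :
  (forall v, peval v a = true -> peval v b = true) -> Thm (Imp a b).
Proof.
  intros H. apply ax_taut. intro v. specialize (H v). simpl.
  destruct (peval v a), (peval v b); simpl; try reflexivity.
  specialize (H eq_refl); discriminate.
Qed.

Lemma thm_taut_mp (a b : F) :
  Thm a -> (forall v, peval v a = true -> peval v b = true) -> Thm b.
Proof. intros Ha H. eapply r_mp; [apply thm_taut_imp, H | exact Ha]. Qed.

Lemma peval_top v : peval v (Top p0) = true.
Proof. simpl. destruct (v (Var p0)); reflexivity. Qed.

Lemma peval_conj_cons v a l :
  peval v (conj p0 (a :: l)) = andb (peval v a) (peval v (conj p0 l)).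
Proof.
  destruct l as [|b l]; [|reflexivity].
  cbn [conj]. rewrite peval_top. destruct (peval v a); reflexivity.
Qed.

Lemma peval_conj v l :
  peval v (conj p0 l) = true <-> forall g, In g l -> peval v g = true.
Proof.
  induction l as [|a l IH].
  - split; [intros _ g []|intros; apply peval_top].
  - rewrite peval_conj_cons, Bool.andb_true_iff, IH. simpl.
    split; [intros [Ha Hl] g [<-|Hg]; auto | intros H; split; auto].
Qed.

Lemma derives_mono (S T : F -> Prop) f :
  (forall x, S x -> T x) -> derives S f -> derives T f.
Proof. intros HST [l [Hl Ht]]. exists l. split; auto. Qed.

Lemma derives_thm S a : Thm a -> derives S a.
Proof.
  intros H. exists []. split; [intros g []|].
  apply (thm_taut_mp a); auto. intros v Hv. simpl. rewrite Hv.
  destruct (v (Var p0)); reflexivity.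
Qed.

Lemma derives_hyp (S : F -> Prop) a : S a -> derives S a.
Proof.
  intros H. exists [a]. split; [intros g [<-|[]]; auto|].
  apply thm_taut_imp. auto.
Qed.

Lemma derives_taut2 S a b c : derives S a -> derives S b ->
  (forall v, peval v a = true -> peval v b = true -> peval v c = true) ->
  derives S c.
Proof.
  intros [l1 [Hl1 Ht1]] [l2 [Hl2 Ht2]] H. exists (l1 ++ l2). split.
  { intros g Hg. apply in_app_or in Hg. destruct Hg; auto. }
  assert (Hc : Thm (And (Imp (conj p0 l1) a) (Imp (conj p0 l2) b))).
  { eapply r_mp; [|exact Ht2]. eapply r_mp; [|exact Ht1]. apply ax_taut. bool_cases. }
  apply (thm_taut_mp _ _ Hc). intros v. specialize (H v). simpl.
  destruct (peval v (conj p0 (l1 ++ l2))) eqn:E; simpl; [|intros; reflexivity].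
  rewrite peval_conj in E.
  rewrite (proj2 (peval_conj v l1)), (proj2 (peval_conj v l2));
    try (intros; apply E, in_or_app; auto).
  destruct (peval v a), (peval v b), (peval v c); simpl; auto.
Qed.

Lemma derives_taut1 S a b : derives S a ->
  (forall v, peval v a = true -> peval v b = true) -> derives S b.
Proof. intros Ha H. apply (derives_taut2 S a a b Ha Ha). auto. Qed.

Lemma remove_hyp (S : F -> Prop) x l : (forall g, In g l -> extend S x g) ->
  exists l', (forall g, In g l' -> S g) /\ forall v,
    peval v (conj p0 l') = true -> peval v x = true -> peval v (conj p0 l) = true.
Proof.
  induction l as [|a l IH]; intros H.
  - exists []. split; [intros g []|]. intros; apply peval_top.
  - destruct IH as [l' [H1 H2]]; [intros g Hg; apply H; right; auto|].
    destruct (H a (or_introl eq_refl)) as [Ha| ->].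
    + exists (a :: l'). split; [intros g [<-|Hg]; auto|].
      intros v Hv Hx. rewrite peval_conj_cons in *. apply andb_prop in Hv.
      destruct Hv as [Hv1 Hv2]. rewrite Hv1, (H2 v Hv2 Hx). reflexivity.
    + exists l'. split; auto. intros v Hv Hx.
      rewrite peval_conj_cons, Hx, (H2 v Hv Hx). reflexivity.
Qed.

Lemma deduction S x b : derives (extend S x) b -> derives S (Imp x b).
Proof.
  intros [l [Hl Ht]]. destruct (remove_hyp S x l Hl) as [l' [Hl' Hv]].
  exists l'. split; auto. apply (thm_taut_mp _ _ Ht). intros v.
  specialize (Hv v). simpl.
  destruct (peval v (conj p0 l')), (peval v x), (peval v (conj p0 l)), (peval v b);
    simpl; auto.
Qed.

Lemma sat_imp (M : model P) s (a b : F) :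
  sat M s (Imp a b) <-> (sat M s a -> sat M s b).
Proof. simpl. split; [intros H Ha; apply NNPP; intro Hb; auto | tauto]. Qed.

Lemma sat_or (M : model P) s (a b : F) :
  sat M s (Or a b) <-> (sat M s a \/ sat M s b).
Proof. simpl. split; [intros H; apply NNPP; intro Hn; apply H; split; auto | tauto]. Qed.

Lemma sat_iff (M : model P) s (a b : F) :
  sat M s (Iff a b) <-> (sat M s a <-> sat M s b).
Proof.
  change (sat M s (Imp a b) /\ sat M s (Imp b a) <-> (sat M s a <-> sat M s b)).
  rewrite !sat_imp. tauto.
Qed.

Lemma sat_conj (M : model P) s l :
  (forall g, In g l -> sat M s g) -> sat M s (conj p0 l).
Proof.
  induction l as [|a [|b l] IH]; intros H.
  - simpl. tauto.
  - apply H; left; auto.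
  - split; [apply H; left; auto | apply IH; intros; apply H; right; auto].
Qed.

(* Tautologies are true everywhere: truth at a state is a Boolean valuation. *)
Lemma taut_true (M : model P) s f : taut f -> sat M s f.
Proof.
  intros Ht.
  set (v := fun g => if excluded_middle_informative (sat M s g) then true else false).
  assert (Hv : forall g, peval v g = true <-> sat M s g).
  { induction g as [p|g IH|g1 IH1 g2 IH2|g IH]; simpl.
    - unfold v. destruct (excluded_middle_informative _); intuition discriminate.
    - rewrite <- IH. destruct (peval v g); intuition discriminate.
    - rewrite Bool.andb_true_iff, IH1, IH2. reflexivity.
    - unfold v. destruct (excluded_middle_informative _); intuition discriminate. }
  apply Hv, Ht.
Qed.

(* Axiom "dis" is true in every model: either f holds at some R1-successor,
   hence at all successors, or it holds at none. *)
Lemma dis_true (M : model P) s f g h :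
  sat M s (Imp (Bd f) (Or (Bd (Or f g)) (Bd (Or (Neg f) h)))).
Proof.
  apply sat_imp. intros Hb. apply sat_or. simpl in Hb.
  destruct (classic (exists t, R1 M s t /\ sat M t f)) as [[t0 [Ht0 Hf0]]|Hn].
  - left. intros t u Ht Hu.
    assert (Fu : sat M u f) by (apply (Hb t0 u Ht0 Hu); auto).
    assert (Ft : sat M t f) by (apply (Hb t u Ht Hu); auto).
    rewrite !sat_or. tauto.
  - right. intros t u Ht Hu.
    assert (Ft : ~ sat M t f) by (intro; apply Hn; eauto).
    assert (Fu : ~ sat M u f) by (intro Hf; apply Ft; apply (Hb t u Ht Hu); auto).
    rewrite !sat_or. simpl. tauto.
Qed.

(* Axiom 5^boxdot is true in qe models: a pair of successors t1, u1 of s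
   disagreeing on a is seen from every successor of s (by R1 and R2
   respectively), so boxdot a fails at every successor. *)
Lemma ax5_true_qe (M : model P) (HM : qe M) s a b :
  sat M s (Imp (Neg (Bd a)) (Bd (Or (Neg (Bd a)) b))).
Proof.
  apply sat_imp. intros Hn.
  assert (Hex : exists t1 u1, R1 M s t1 /\ R2 M s u1 /\ ~ (sat M t1 a <-> sat M u1 a)).
  { apply NNPP; intro C. apply Hn. intros t u Ht Hu. apply NNPP; intro D. eauto 6. }
  destruct Hex as [t1 [u1 [Ht1 [Hu1 Hd]]]].
  assert (Key : forall x, R1 M x t1 -> R2 M x u1 -> sat M x (Or (Neg (Bd a)) b)).
  { intros x H1 H2. apply sat_or. left. intro Hx. apply Hd, Hx; auto. }
  intros t u Ht Hu. split; intros _.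
  - apply Key; [exact (HM false true s u t1 Hu Ht1) | exact (HM false false s u u1 Hu Hu1)].
  - apply Key; [exact (HM true true s t t1 Ht Ht1) | exact (HM true false s t u1 Ht Hu1)].
Qed.

Lemma soundness f : Thm f -> forall M : model P, qe M -> forall s, sat M s f.
Proof.
  induction 1 as [f Hf| | f | f g | f g h | f [a [b ->]] | f g _ IHfg _ IHf
                 | f g _ IH]; intros M HM s.
  - apply taut_true; auto.
  - simpl. tauto.
  - apply sat_iff. simpl. split; intros H t u Ht Hu; specialize (H t u Ht Hu); tauto.
  - apply sat_imp. intros [H1 H2] t u Ht Hu.
    specialize (H1 t u Ht Hu). specialize (H2 t u Ht Hu). simpl. tauto.
  - apply dis_true.
  - apply ax5_true_qe; auto.
  - exact (proj1 (sat_imp _ _ _ _) (IHfg M HM s) (IHf M HM s)).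
  - pose proof (fun x => proj1 (sat_iff _ _ _ _) (IH M HM x)) as Hfg.
    apply sat_iff. simpl.
    split; intros H t u Ht Hu; specialize (H t u Ht Hu); rewrite !Hfg in *; exact H.
Qed.

Lemma sound_derives G phi : derives G phi -> conseq qe G phi.
Proof.
  intros [l [Hl Ht]] M s HM HG.
  apply (proj1 (sat_imp _ _ _ _) (soundness _ Ht M HM s)), sat_conj. auto.
Qed.

Definition consistent (S : F -> Prop) : Prop := ~ derives S Bot.
Definition maximal (S : F -> Prop) : Prop := consistent S /\ forall f, S f \/ S (Neg f).

Lemma consistent_extend S f :
  consistent S -> consistent (extend S f) \/ consistent (extend S (Neg f)).
Proof.
  intros HS. destruct (classic (consistent (extend S f))) as [|H1]; [left; auto|right].
  intro H2. apply NNPP, deduction in H1. apply deduction in H2.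
  apply HS, (derives_taut2 _ _ _ _ H1 H2). bool_cases.
Qed.

Lemma zorn_sets (T : Type) (Pc : (T -> Prop) -> Prop) :
  (forall Fm : (T -> Prop) -> Prop, (forall X, Fm X -> Pc X) ->
     (forall X Y, Fm X -> Fm Y -> (forall x, X x -> Y x) \/ (forall x, Y x -> X x)) ->
     Pc (fun x => exists2 X, Fm X & X x)) ->
  exists A, Pc A /\ forall B, (forall x, A x -> B x) -> ~ (forall x, B x -> A x) -> ~ Pc B.
Proof.
  intros H. destruct (@classical_sets.Zorn_bigcup T Pc H) as [A [H1 H2]].
  exists A. split; auto. intros B HAB HBA. apply H2. split; auto.
Qed.

Lemma chain_cover (G : F -> Prop) (Fm : (F -> Prop) -> Prop) l :
  (forall X Y, Fm X -> Fm Y -> (forall x, X x -> Y x) \/ (forall x, Y x -> X x)) ->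
  (forall g, In g l -> G g \/ exists2 X, Fm X & X g) ->
  (forall g, In g l -> G g) \/ exists X, Fm X /\ forall g, In g l -> G g \/ X g.
Proof.
  intros Htot. induction l as [|a l IH]; intros H; [left; intros g []|].
  assert (Hl : forall g, In g l -> G g \/ exists2 X, Fm X & X g)
    by (intros g Hg; apply H; right; auto).
  destruct (IH Hl) as [H1|[X [HX H2]]], (H a (or_introl eq_refl)) as [Ha|[X0 HX0 Ha]].
  - left; intros g [<-|Hg]; auto.
  - right; exists X0; split; auto. intros g [<-|Hg]; auto.
  - right; exists X; split; auto. intros g [<-|Hg]; auto.
  - destruct (Htot X0 X HX0 HX) as [Hs|Hs].
    + right; exists X; split; auto. intros g [<-|Hg]; auto.
    + right; exists X0; split; auto. intros g [<-|Hg]; auto.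
      destruct (H2 g Hg); auto.
Qed.

Lemma lindenbaum G : consistent G -> exists S, maximal S /\ forall f, G f -> S f.
Proof.
  intros HG. set (Pc := fun A : F -> Prop => consistent (fun f => G f \/ A f)).
  destruct (zorn_sets F Pc) as [A [HA Hmax]].
  { intros Fm HFm Htot [l [Hl Ht]].
    destruct (chain_cover G Fm l Htot Hl) as [H1|[X [HX H2]]].
    - apply HG; exists l; split; auto.
    - apply (HFm X HX); exists l; split; auto. }
  assert (Hadd : forall x, consistent (extend (fun f => G f \/ A f) x) -> A x).
  { intros x Hc. apply NNPP; intro Hx.
    apply (Hmax (fun y => A y \/ y = x)); [intros y; auto | intro Hs; apply Hx, Hs; auto |].
    intro Hd. apply Hc. revert Hd. apply derives_mono.
    intros y [Hy|[Hy|Hy]]; [left; left | left; right | right]; assumption. }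
  exists (fun f => G f \/ A f). split; [split|].
  - exact HA.
  - intros f. destruct (consistent_extend _ f HA) as [H|H]; [left|right]; right; auto.
  - intros f Hf; left; auto.
Qed.

Section Maximal.
Variable S : F -> Prop.
Hypothesis HS : maximal S.

Lemma mcs_closed f : derives S f -> S f.
Proof.
  intros Hf. destruct (proj2 HS f) as [|Hn]; auto. exfalso.
  apply (proj1 HS), (derives_taut2 _ _ _ _ Hf (derives_hyp _ _ Hn)). bool_cases.
Qed.

Lemma mcs_thm f : Thm f -> S f.
Proof. intros H. apply mcs_closed, derives_thm, H. Qed.

Lemma mcs_taut2 a b c : S a -> S b ->
  (forall v, peval v a = true -> peval v b = true -> peval v c = true) -> S c.
Proof. intros Ha Hb H. apply mcs_closed, (derives_taut2 _ a b); auto using derives_hyp. Qed.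

Lemma mcs_taut1 a b : S a -> (forall v, peval v a = true -> peval v b = true) -> S b.
Proof. intros Ha H. apply (mcs_taut2 a a b); auto. Qed.

Lemma mcs_neg f : S (Neg f) <-> ~ S f.
Proof.
  split.
  - intros Hn Hf. apply (proj1 HS), derives_hyp, (mcs_taut2 _ _ _ Hf Hn). bool_cases.
  - intros Hn. destruct (proj2 HS f); tauto.
Qed.

Lemma mcs_imp a b : S (Imp a b) -> S a -> S b.
Proof. intros H1 H2. apply (mcs_taut2 _ _ _ H1 H2). bool_cases. Qed.

Lemma mcs_or a b : S (Or a b) -> S a \/ S b.
Proof.
  intros H. destruct (proj2 HS a) as [|Hn]; auto.
  right. apply (mcs_taut2 _ _ _ H Hn). bool_cases.
Qed.

Lemma mcs_and a b : S (And a b) <-> S a /\ S b.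
Proof.
  split.
  - intros H. split; apply (mcs_taut1 _ _ H); bool_cases.
  - intros [H1 H2]. apply (mcs_taut2 _ _ _ H1 H2). bool_cases.
Qed.

Lemma mcs_re a b : Thm (Iff a b) -> S (Bd a) -> S (Bd b).
Proof.
  intros Hab Ha. apply (mcs_taut2 _ _ _ (mcs_thm _ (r_re _ _ _ _ _ Hab)) Ha). bool_cases.
Qed.

Lemma mcs_bd_equiv a b : (forall v, peval v a = peval v b) -> S (Bd a) -> S (Bd b).
Proof.
  intros H. apply mcs_re, ax_taut. intro v. simpl. rewrite H.
  destruct (peval v b); reflexivity.
Qed.

Lemma mcs_bd_neg f : S (Bd (Neg f)) <-> S (Bd f).
Proof.
  split; intros H; apply (mcs_taut2 _ _ _ (mcs_thm _ (ax_neg _ _ _ f)) H); bool_cases.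
Qed.

Lemma mcs_bd_and a b : S (Bd a) -> S (Bd b) -> S (Bd (And a b)).
Proof. intros H1 H2. apply (mcs_imp _ _ (mcs_thm _ (ax_and _ _ _ a b))), mcs_and. auto. Qed.

Lemma mcs_dis f g h : S (Bd f) -> S (Bd (Or f g)) \/ S (Bd (Or (Neg f) h)).
Proof. intros H. apply mcs_or, (mcs_imp _ _ (mcs_thm _ (ax_dis _ _ _ f g h)) H). Qed.

(* The box of S: the formulas that will hold at every successor of S. *)
Definition box (f : F) : Prop := forall g, S (Bd (Or f g)).

Lemma box_bd f : box f -> S (Bd f).
Proof. intros H. refine (mcs_bd_equiv _ _ _ (H f)). bool_cases. Qed.

Lemma box_not_bd a : ~ S (Bd a) -> box (Neg (Bd a)).
Proof.
  intros Ha g. apply (mcs_imp (Neg (Bd a))).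
  - apply mcs_thm, ax_extra. exists a, g. reflexivity.
  - apply mcs_neg. exact Ha.
Qed.

(* The box is a well-behaved set of formulas once some boxdot chi is missing. *)
Section Nontrivial.
Variable chi : F.
Hypothesis Hchi : ~ S (Bd chi).

(* boxdot(a \/ chi) and boxdot(~a \/ chi) would give boxdot chi. *)
Lemma not_both a : S (Bd (Or a chi)) -> S (Bd (Or (Neg a) chi)) -> False.
Proof.
  intros H1 H2. apply Hchi. refine (mcs_bd_equiv _ _ _ (mcs_bd_and _ _ H1 H2)). bool_cases.
Qed.

Lemma box_intro f : S (Bd f) -> S (Bd (Or f chi)) -> box f.
Proof.
  intros H1 H2 g. destruct (mcs_dis f g chi H1) as [|H3]; auto.
  exfalso. apply (not_both f); auto.
Qed.

Lemma box_decides f : S (Bd f) -> box f \/ box (Neg f).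
Proof.
  intros Hf. destruct (mcs_dis f chi chi Hf) as [H|H]; [left | right];
    apply box_intro; auto; apply mcs_bd_neg; auto.
Qed.

Lemma box_mono a b : box a -> Thm (Imp a b) -> box b.
Proof.
  intros Ha Ht g. destruct (mcs_dis a (Or b g) chi (box_bd _ Ha)) as [H1|H1].
  - refine (mcs_re _ _ (thm_taut_mp _ _ Ht _) H1). bool_cases.
  - exfalso. apply (not_both a); auto.
Qed.

Lemma box_and a b : box a -> box b -> box (And a b).
Proof.
  intros Ha Hb. apply box_intro.
  - apply mcs_bd_and; apply box_bd; auto.
  - refine (mcs_bd_equiv _ _ _ (mcs_bd_and _ _ (Ha chi) (Hb chi))). bool_cases.
Qed.

Lemma box_top : box (Top p0).
Proof.
  apply box_intro; [apply mcs_thm, ax_top|].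
  refine (mcs_bd_equiv _ _ _ (mcs_thm _ (ax_top _ _ _))). bool_cases.
Qed.

Lemma box_conj l : (forall g, In g l -> box g) -> box (conj p0 l).
Proof.
  induction l as [|a l IH]; intros H; [apply box_top|].
  apply (box_mono (And a (conj p0 l))).
  - apply box_and; [apply H; left; auto | apply IH; intros; apply H; right; auto].
  - apply thm_taut_imp. intros v Hv. rewrite peval_conj_cons. exact Hv.
Qed.

End Nontrivial.
End Maximal.

Definition succ (S T : F -> Prop) : Prop :=
  (exists chi, ~ S (Bd chi)) /\ forall f, box S f -> T f.

Lemma succ_exists S psi : maximal S -> (exists chi, ~ S (Bd chi)) -> ~ box S psi ->
  exists T, maximal T /\ succ S T /\ T (Neg psi).
Proof.
  intros HS [chi Hchi] Hpsi.
  destruct (lindenbaum (extend (box S) (Neg psi))) as [T [HT HTs]].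
  - intros Hd. destruct (deduction _ _ _ Hd) as [l [Hl Ht]]. apply Hpsi.
    apply (box_mono S HS chi Hchi (conj p0 l)); [apply (box_conj S HS chi Hchi); auto|].
    apply (thm_taut_mp _ _ Ht). bool_cases.
  - exists T. split; [exact HT | split; [split; [exists chi; exact Hchi|] |]];
      [intros f Hf | ]; apply HTs; [left | right]; auto.
Qed.

Lemma succ_bd_agree S T U f : maximal S -> maximal T -> maximal U ->
  S (Bd f) -> succ S T -> succ S U -> (T f <-> U f).
Proof.
  intros HS HT HU Hf [[chi Hchi] HST] [_ HSU].
  destruct (box_decides S HS chi Hchi f Hf) as [H|H].
  - split; intros _; auto.
  - pose proof (proj1 (mcs_neg T HT f) (HST _ H)).
    pose proof (proj1 (mcs_neg U HU f) (HSU _ H)). tauto.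
Qed.

Lemma succ_bd_witness S f : maximal S -> ~ S (Bd f) ->
  exists T U, maximal T /\ maximal U /\ succ S T /\ succ S U /\ ~ T f /\ U f.
Proof.
  intros HS Hf. assert (Hnt : exists chi, ~ S (Bd chi)) by eauto.
  destruct (succ_exists S f HS Hnt) as [T [HT [HST Tf]]].
  { intro H. apply Hf, box_bd; auto. }
  destruct (succ_exists S (Neg f) HS Hnt) as [U [HU [HSU Uf]]].
  { intro H. apply Hf, mcs_bd_neg, box_bd; auto. }
  apply (mcs_neg T HT) in Tf. apply (mcs_neg U HU) in Uf.
  exists T, U. do 5 (split; [assumption|]). destruct (proj2 HU f); tauto.
Qed.

(* Axiom 5^boxdot makes the successor relation Euclidean. *)
Lemma succ_euclidean S T U : maximal S -> maximal T -> succ S T -> succ S U -> succ T U.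
Proof.
  intros HS HT [[chi Hchi] HST] [_ HSU]. split.
  - exists chi. apply (mcs_neg T HT), HST, box_not_bd; auto.
  - intros f Hf. apply HSU. apply NNPP; intro Hnb.
    destruct (classic (S (Bd f))) as [H1|H1].
    + assert (H2 : ~ S (Bd (Or f chi))) by (intro; apply Hnb, (box_intro S HS chi); auto).
      apply (proj1 (mcs_neg T HT _) (HST _ (box_not_bd S HS _ H2))), Hf.
    + apply (proj1 (mcs_neg T HT _) (HST _ (box_not_bd S HS _ H1))), (box_bd T HT), Hf.
Qed.

Definition world : Type := { S : F -> Prop | maximal S }.

Definition canonical (w : world) : model P :=
  {| st := world; st_inh := inhabits w;
     R1 := fun s t => succ (proj1_sig s) (proj1_sig t);
     R2 := fun s t => succ (proj1_sig s) (proj1_sig t);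
     val := fun p s => proj1_sig s (Var p) |}.

Lemma canonical_pe w : pe (canonical w).
Proof.
  intros i j x y z Hxy Hxz.
  assert (H : succ (proj1_sig y) (proj1_sig z)).
  { apply (succ_euclidean (proj1_sig x)); [exact (proj2_sig x) | exact (proj2_sig y) | |];
      [destruct i | destruct j]; assumption. }
  split; exact H.
Qed.

Lemma truth w f : forall s : world, sat (canonical w) s f <-> proj1_sig s f.
Proof.
  induction f as [p|f IH|f1 IH1 f2 IH2|f IH]; intros [S HS]; simpl in *.
  - reflexivity.
  - rewrite (IH (exist _ S HS)), mcs_neg; [reflexivity | exact HS].
  - rewrite (IH1 (exist _ S HS)), (IH2 (exist _ S HS)), mcs_and; [reflexivity | exact HS].
  - split.
    + intros Hb. apply NNPP; intro Hn.
      destruct (succ_bd_witness S f HS Hn) as [T [U [HT [HU [HST [HSU [Tf Uf]]]]]]].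
      apply Tf, (IH (exist _ T HT)), (Hb (exist _ T HT) (exist _ U HU) HST HSU),
        (IH (exist _ U HU)), Uf.
    + intros Hf t u Ht Hu. rewrite (IH t), (IH u).
      exact (succ_bd_agree _ _ _ f HS (proj2_sig t) (proj2_sig u) Hf Ht Hu).
Qed.

Lemma completeness G phi : conseq pe G phi -> derives G phi.
Proof.
  intros H. apply NNPP; intro Hn.
  destruct (lindenbaum (extend G (Neg phi))) as [S [HS HGS]].
  - intro Hd. apply Hn, (derives_taut1 _ _ _ (deduction _ _ _ Hd)). bool_cases.
  - set (w := exist _ S HS : world).
    assert (Hphi : S phi).
    { apply (truth w phi w), H; [apply canonical_pe|].
      intros g Hg. apply (truth w g w), HGS. left; exact Hg. }
    apply (mcs_neg S HS phi); [apply HGS; right |]; auto.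
Qed.

Lemma pe_qe (M : model P) : pe M -> qe M.
Proof. intros H i j x y z H1 H2. destruct (H i j x y z H1 H2), j; assumption. Qed.

End K5Boxdot.

Theorem mainTheorem20 (P : Type) (p0 : P) (G : form P -> Prop) (phi : form P) :
  (K5_derives p0 G phi <-> conseq qe G phi) /\
  (conseq qe G phi <-> conseq pe G phi).
Proof.
  pose proof (sound_derives P p0 G phi) as Hsound.
  pose proof (completeness P p0 G phi) as Hcomplete.
  assert (Hqe_pe : conseq qe G phi -> conseq pe G phi).
  { intros H M s HM. apply H, pe_qe, HM. }
  tauto.
Qed.
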